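(* Let $K$ be a field of characteristic $p>0$. Let $W_1,W_2$ be subfields of $K$ such that $(K,W_1,W_2)$ is a $2$-foliation on $K$, and let $W_3$ be a subfield of $W_2$ such that $(W_1,W_2,W_3)$ is a $2$-foliation on $W_1$. Then $(K,W_1,W_2,W_3)$ is a $3$-foliation on $K$.
   Context: For a field $F$ of characteristic $p$, a power tower on $F$ is a sequence of subfields $V_0,V_1,\ldots$ of $F$ with $V_j=V_i\cdot F^{p^j}$ whenever $j\le i$ ($\cdot$ = compositum in $F$). For a positive integer $n$, an $n$-foliation on $F$ is a chain of subfields $F=V_0\supseteq V_1\supseteq\cdots\supseteq V_n$ such that the sequence $V_0,V_1,\ldots,V_n,V_n,V_n,\ldots$ is a power tower on $F$ of length exactly $n$ (i.e. $n$ is the least integer with $V_N=V_n$ for all $N\ge n$) and $\dim_{V_{i+1}}(V_i)=\dim_{V_{j+1}}(V_j)$ for all $0\le i,j<n$. *)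

From mathcomp Require Import all_boot all_algebra.
Set Implicit Arguments. Unset Strict Implicit. Unset Printing Implicit Defensive.
Import GRing.Theory.
Local Open Scope ring_scope.

Section Foliation.
Variable K : fieldType.

Definition sub_set (A B : K -> Prop) := forall x, A x -> B x.
Definition eq_set (A B : K -> Prop) := forall x, A x <-> B x.

Definition is_subfield (S : K -> Prop) :=
  [/\ S 0, S 1, (forall x y, S x -> S y -> S (x - y)),
      (forall x y, S x -> S y -> S (x * y)) & (forall x, S x -> S x^-1)].

(* The compositum (inside K) of V and F^{p^j} := {y^(p^j) | y in F}:
   the smallest subfield of K containing both. *)
Definition compositum_pow (p : nat) (F V : K -> Prop) (j : nat) : K -> Prop :=
  fun x => forall S, is_subfield S -> sub_set V S ->
    (forall y, F y -> S (y ^+ (p ^ j))) -> S x.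

Definition lin_indep (L B : K -> Prop) :=
  forall (s : seq K) (c : K -> K), uniq s -> (forall b, b \in s -> B b) ->
    (forall b, L (c b)) -> \sum_(b <- s) c b * b = 0 ->
    forall b, b \in s -> c b = 0.

Definition spans (L B V : K -> Prop) :=
  forall x, V x -> exists (s : seq K) (c : K -> K),
    [/\ (forall b, b \in s -> B b), (forall b, L (c b)) &
        x = \sum_(b <- s) c b * b].

Definition is_basis (V L B : K -> Prop) :=
  [/\ sub_set B V, lin_indep L B & spans L B V].

(* dim_{L1}(V1) = dim_{L2}(V2) (as cardinals): some basis of V1 over L1 is
   in bijection with some basis of V2 over L2. *)
Definition same_dim (V1 L1 V2 L2 : K -> Prop) :=
  exists B1 B2 (f g : K -> K),
    [/\ is_basis V1 L1 B1, is_basis V2 L2 B2,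
        (forall b, B1 b -> B2 (f b)) /\ (forall b, B2 b -> B1 (g b)),
        (forall b, B1 b -> g (f b) = b) & (forall b, B2 b -> f (g b) = b)].

(* The chain s = [:: V_0; ...; V_n] extended by V_n forever. *)
Definition ext_seq (s : seq (K -> Prop)) (N : nat) : K -> Prop :=
  nth (fun _ => False) s (minn N (size s).-1).

Definition power_tower (p : nat) (F : K -> Prop) (V : nat -> K -> Prop) :=
  (forall i, is_subfield (V i) /\ sub_set (V i) F) /\
  (forall i j, (j <= i)%N -> eq_set (V j) (compositum_pow p F (V i) j)).

Definition foliation (p : nat) (F : K -> Prop) (n : nat) (s : seq (K -> Prop)) :=
  let V := ext_seq s in
  [/\ (0 < n)%N /\ size s = n.+1, eq_set (V 0%N) F,
      (forall i, (i < n)%N -> sub_set (V i.+1) (V i)) /\ power_tower p F V,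
      (* length exactly n: n is the least m with V_N = V_m for all N >= m *)
      (forall m, (m < n)%N -> ~ (forall N, (m <= N)%N -> eq_set (V N) (V m))) &
      (forall i j, (i < n)%N -> (j < n)%N ->
         same_dim (V i) (V i.+1) (V j) (V j.+1))].

End Foliation.

(* It suffices that every member of the chain V = (K, W1, W2, W3, W3, ...) is
   generated over the bottom field: V_j = W3 K^(p^j) for all j.  For j = 1,
   substitute W2 = W3 W1^p into W1 = W2 K^p.  For j = 2, if S contains W3 and
   K^(p^2), then {x | x^p \in S} is a subfield containing W3 and K^p, hence W1;
   so S contains W1^p and with it W2 = W3 W1^p.  For j >= 3, K^(p^j) lies in
   W1^(p^2), which lies in W3.  The chain cannot stabilise earlier since neither
   given chain does.  The three relative degrees agree because equality of
   dimension is transitive: two bases of a vector space of any dimension are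
   equipotent, since an exchange argument with Zorn's lemma injects an
   independent set into any set spanning it, and Cantor-Bernstein concludes. *)

From HB Require Import structures.
From mathcomp Require Import all_boot all_algebra.
From mathcomp Require Import boolp classical_sets functions cardinality.
Set Implicit Arguments. Unset Strict Implicit. Unset Printing Implicit Defensive.
Import GRing.Theory.
Local Open Scope ring_scope.

Section Subfield.
Variables (K : fieldType) (S : K -> Prop).
Hypothesis hS : is_subfield S.

Lemma subfield0 : S 0. Proof. by case: hS. Qed.
Lemma subfield1 : S 1. Proof. by case: hS. Qed.
Lemma subfieldB x y : S x -> S y -> S (x - y). Proof. by case: hS => _ _ hB _ _; apply: hB. Qed.
Lemma subfieldM x y : S x -> S y -> S (x * y). Proof. by case: hS => _ _ _ hM _; apply: hM. Qed.
Lemma subfieldV x : S x -> S x^-1. Proof. by case: hS => _ _ _ _ hV; apply: hV. Qed.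

Lemma subfieldN x : S x -> S (- x).
Proof. by move=> Sx; rewrite -sub0r; apply: subfieldB => //; apply: subfield0. Qed.

Lemma subfieldD x y : S x -> S y -> S (x + y).
Proof. by move=> Sx Sy; rewrite -[y]opprK; apply/subfieldB/subfieldN. Qed.

Lemma subfieldX x n : S x -> S (x ^+ n).
Proof.
move=> Sx; elim: n => [|n IHn]; first by rewrite expr0; apply: subfield1.
by rewrite exprS; apply: subfieldM.
Qed.

Lemma subfield_sum (I : Type) (r : seq I) (P : pred I) (F : I -> K) :
  (forall i, P i -> S (F i)) -> S (\sum_(i <- r | P i) F i).
Proof. by move=> SF; apply: big_ind => //; [exact: subfield0 | exact: subfieldD]. Qed.

End Subfield.

Lemma subfield_frobenius_preimage (K : fieldType) (p : nat) (S : K -> Prop) :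
  p \in [pchar K] -> is_subfield S -> is_subfield (fun x => S (x ^+ p)).
Proof.
move=> hp hS; split.
- by rewrite -pFrobenius_autE pFrobenius_aut0 //; apply: subfield0.
- by rewrite expr1n; apply: subfield1.
- move=> x y Sx Sy; rewrite -pFrobenius_autE pFrobenius_autB_comm; last exact: mulrC.
  by rewrite !pFrobenius_autE; apply: subfieldB.
- by move=> x y Sx Sy; rewrite exprMn; apply: subfieldM.
- by move=> x Sx; rewrite exprVn; apply: subfieldV.
Qed.

Section LinearAlgebra.
Variables (K : fieldType) (L : K -> Prop).
Hypothesis hL : is_subfield L.
Implicit Types (C D : K -> Prop) (t : seq (K * K)).

Definition lspan C x := exists t,
  (forall u, u \in t -> L u.1 /\ C u.2) /\ x = \sum_(u <- t) u.1 * u.2.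

Lemma lspan_mem C x : C x -> lspan C x.
Proof.
move=> Cx; exists [:: (1, x)]; rewrite big_seq1 mul1r; split => // u.
by rewrite inE => /eqP -> /=; split => //; apply: subfield1.
Qed.

Lemma lspan0 C : lspan C 0.
Proof. by exists [::]; rewrite big_nil. Qed.

Lemma lspanD C x y : lspan C x -> lspan C y -> lspan C (x + y).
Proof.
move=> [t1 [h1 ->]] [t2 [h2 ->]]; exists (t1 ++ t2); rewrite big_cat; split => // u.
by rewrite mem_cat => /orP[/h1|/h2].
Qed.

Lemma lspanZ C a x : L a -> lspan C x -> lspan C (a * x).
Proof.
move=> La [t [ht ->]]; exists [seq (a * u.1, u.2) | u <- t]; split.
  by move=> _ /mapP[u /ht[Lu Cu] ->]; split => //; apply: subfieldM.
by rewrite big_map mulr_sumr; apply: eq_bigr => u _; rewrite mulrA.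
Qed.

Lemma lspan_trans C D x : (forall y, D y -> lspan C y) -> lspan D x -> lspan C x.
Proof.
move=> DC [t [ht ->]]; elim: t ht => [|u t IHt] ht; first by rewrite big_nil; apply: lspan0.
have [Lu Du] := ht u (mem_head _ _).
rewrite big_cons; apply: lspanD; first exact: lspanZ (DC _ Du).
by apply: IHt => v vt; apply: ht; rewrite inE vt orbT.
Qed.

Lemma spans_lspan B V x : spans L B V -> V x -> lspan B x.
Proof.
move=> hspan /hspan[s [c [Bs Lc ->]]]; exists [seq (c b, b) | b <- s].
by rewrite big_map; split => // _ /mapP[b bs ->]; split; [exact: Lc | exact: Bs].
Qed.

Lemma sum_pairs_group (s : seq K) t : uniq s -> (forall u, u \in t -> u.2 \in s) ->
  \sum_(y <- s) (\sum_(u <- t | u.2 == y) u.1) * y = \sum_(u <- t) u.1 * u.2.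
Proof.
move=> us ts; transitivity (\sum_(y <- s) \sum_(u <- t | u.2 == y) u.1 * u.2).
  by apply: eq_bigr => y _; rewrite mulr_suml; apply: eq_bigr => u /eqP ->.
rewrite (exchange_big_dep predT) //= big_seq [RHS]big_seq; apply: eq_bigr => u ut.
rewrite -big_filter (@eq_filter _ _ (pred1 u.2)) => [|y]; last by rewrite /= eq_sym.
by rewrite filter_pred1_uniq ?ts // big_seq1.
Qed.

Lemma lin_indep_sub C D : sub_set C D -> lin_indep L D -> lin_indep L C.
Proof. by move=> CD hD s c us sC; apply: hD => // y /sC /CD. Qed.

Lemma lin_indep_pairs C t : lin_indep L C -> (forall u, u \in t -> L u.1 /\ C u.2) ->
  \sum_(u <- t) u.1 * u.2 = 0 -> forall y, \sum_(u <- t | u.2 == y) u.1 = 0.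
Proof.
move=> hC ht t0 y; pose s := undup [seq u.2 | u <- t].
have ts u : u \in t -> u.2 \in s by move=> ut; rewrite mem_undup map_f.
have [ys|yNs] := boolP (y \in s); last first.
  rewrite big_seq_cond big1 // => u /andP[/ts + /eqP uy].
  by rewrite uy (negPf yNs).
apply: (hC s (fun y => \sum_(u <- t | u.2 == y) u.1)) ys.
- exact: undup_uniq.
- by move=> x; rewrite mem_undup => /mapP[u /ht[_ Cu] ->].
- by move=> x; rewrite big_seq_cond; apply: subfield_sum => // u /andP[/ht[]].
- by rewrite sum_pairs_group // undup_uniq.
Qed.

Lemma lin_indep_notin_lspan C D b : lin_indep L D -> D b ->
  (forall x, C x -> D x /\ x <> b) -> ~ lspan C b.
Proof.
move=> hD Db CD [t [ht tb]].
have ht' u : u \in (-1, b) :: t -> L u.1 /\ D u.2.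
  rewrite inE => /orP[/eqP -> /=|/ht[Lu /CD[Du _]]]; last by [].
  by split => //; apply/(subfieldN hL)/(subfield1 hL).
have t'0 : \sum_(u <- (-1, b) :: t) u.1 * u.2 = 0 by rewrite big_cons /= -tb mulN1r addNr.
have := lin_indep_pairs hD ht' t'0 b.
rewrite big_cons /= eqxx big_seq_cond big1 ?addr0 => [/eqP|u /andP[/ht[_ /CD[_ ub]] /eqP//]].
by rewrite oppr_eq0 oner_eq0.
Qed.

Lemma lin_indep_adjoin C x : lin_indep L C -> ~ lspan C x ->
  lin_indep L (fun y => C y \/ y = x).
Proof.
move=> hC Nx s c us sCx Lc s0.
have sC y : y \in s -> y != x -> C y by move=> /sCx[//|->]; rewrite eqxx.
have cx0 : x \in s -> c x = 0.
  move=> xs; apply: contra_notP Nx => /eqP cx.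
  exists [seq (- (c x)^-1 * c y, y) | y <- s & y != x]; split.
    move=> u /mapP[y]; rewrite mem_filter => /andP[yx ys] -> /=; split; last exact: sC.
    by apply: subfieldM => //; apply/(subfieldN hL)/(subfieldV hL).
  move: s0; rewrite (bigD1_seq x xs us) /= addrC => /eqP; rewrite addr_eq0 => /eqP sx.
  rewrite big_map big_filter; under eq_bigr do rewrite -mulrA.
  by rewrite -mulr_sumr sx mulrNN mulrA mulVf // mul1r.
move=> b bs; have [bx|bx] := eqVneq b x; first by rewrite bx cx0 // -bx.
apply: (hC [seq y <- s | y != x] c); rewrite ?filter_uniq ?mem_filter ?bx //.
  by move=> y; rewrite mem_filter => /andP[yx ys]; apply: sC.
rewrite big_filter; move: s0; rewrite (bigID (fun y => y != x)) /=.
rewrite [X in _ + X]big_seq_cond [X in _ + X]big1 ?addr0 // => y /andP[ys].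
by rewrite negbK => /eqP yx; rewrite yx cx0 ?mul0r // -yx.
Qed.

End LinearAlgebra.

Section Dimension.
Local Open Scope classical_set_scope.
Local Open Scope card_scope.

Lemma chain_bound (T : Type) (I : eqType) (F : set (set T)) (X0 : set T)
    (P : I -> set T -> Prop) (s : seq I) :
  F X0 -> total_on F subset -> (forall i X Y, X `<=` Y -> P i X -> P i Y) ->
  (forall i, i \in s -> exists2 X, F X & P i X) ->
  exists2 X, F X & forall i, i \in s -> P i X.
Proof.
move=> FX0 Ftot Pmono; elim: s => [|i s IHs] Ps; first by exists X0.
have [X FX PsX] := IHs (fun j js => Ps j (@mem_behead _ (i :: s) j js)).
have [Y FY PiY] := Ps i (mem_head _ _).
have [XY|YX] := Ftot X Y FX FY.
- by exists Y => // j; rewrite inE => /orP[/eqP -> //|/PsX]; apply: Pmono XY.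
- by exists X => // j; rewrite inE => /orP[/eqP ->|/PsX //]; exact: Pmono YX PiY.
Qed.

Variable K : fieldType.

(* [get] and the cardinality lemmas for pointed types need an inhabitant. *)
#[local, non_forgetful_inheritance]
HB.instance Definition _ := isPointed.Build K 0.

Section Exchange.
Variables (L B B' : K -> Prop).
Hypotheses (hL : is_subfield L) (hB : lin_indep L B).
Hypothesis hBB' : forall b, B b -> lspan L B' b.

Definition exchanged (R : set (K * K)) x :=
  (exists a, R (a, x)) \/ (B x /\ forall z, ~ R (x, z)).

(* Partial matchings of B into B' along which B can be exchanged while staying
   independent.  By [exchange_closed], an unmatched element of B is never a
   partner, so it can be swapped out without losing one. *)
Record exchange (R : set (K * K)) : Prop := Exchange {
  exchange_sub a y : R (a, y) -> B a /\ B' y;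
  exchange_functional a y z : R (a, y) -> R (a, z) -> y = z;
  exchange_inj a a' y : R (a, y) -> R (a', y) -> a = a';
  exchange_closed a y : R (a, y) -> B y -> exists z, R (y, z);
  exchange_indep : lin_indep L (exchanged R) }.

Lemma exchange0 : exchange set0.
Proof.
split=> [a y //|a y z //|a a' y //|a y //|].
by apply: (lin_indep_sub _ hB) => x [[a]|[]].
Qed.

Lemma exchange_bigcup (F : set (set (K * K))) :
  F `<=` exchange -> total_on F subset -> exchange (\bigcup_(X in F) X).
Proof.
move=> Fex Ftot; set U := \bigcup_(X in F) X.
have common u v : U u -> U v -> exists2 X, F X & X u /\ X v.
  move=> [X FX Xu] [Y FY Yv]; have [XY|YX] := Ftot X Y FX FY.
  - by exists Y => //; split => //; apply: XY.
  - by exists X => //; split => //; apply: YX.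
split.
- by move=> a y [X /Fex[sub _ _ _ _]]; apply: sub.
- move=> a y z Ray Raz; have [X /Fex[_ Xfun _ _ _] [Xay Xaz]] := common _ _ Ray Raz.
  exact: Xfun Xay Xaz.
- move=> a a' y Ray Ra'y; have [X /Fex[_ _ Xinj _ _] [Xay Xa'y]] := common _ _ Ray Ra'y.
  exact: Xinj Xay Xa'y.
- move=> a y [X FX Xay] By; have [z Xyz] := exchange_closed (Fex _ FX) Xay By.
  by exists z; exists X.
pose F' := set0 |` F. (* set0 witnesses the elements left unmatched in U *)
have F'ex X : F' X -> exchange X by case=> [->|/Fex//]; apply: exchange0.
have F'U X : F' X -> X `<=` U by case=> [->|FX] // u Xu; exists X.
have F'tot : total_on F' subset.
  by move=> X Y [->|FX] [->|FY]; [left|left|right|apply: Ftot].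
pose P x (X : set (K * K)) := (exists a, X (a, x)) \/ (B x /\ forall z, ~ U (x, z)).
move=> s c us sU; have [X F'X sX] : exists2 X, F' X & forall x, x \in s -> P x X.
  apply: (chain_bound (X0 := set0)) => //; first by left.
    by move=> x X Y XY [[a /XY Yax]|]; [left; exists a|right].
  move=> x /sU[[a [X FX Xax]]|Ux]; first by exists X; [right|left; exists a].
  by exists set0; [left|right].
apply: (exchange_indep (F'ex _ F'X)) => // x /sX[|[Bx Ux]]; first by left.
by right; split => // z /(F'U _ F'X)/Ux.
Qed.

Lemma exchange_extend R b : exchange R -> B b -> (forall z, ~ R (b, z)) ->
  exists b', exchange (R `|` [set (b, b')]).
Proof.
move=> [Rsub Rfun Rinj Rclosed Rindep] Bb bfree.
have Nab a : ~ R (a, b) by move=> /Rclosed/(_ Bb)[z /bfree].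
pose C x := exchanged R x /\ x <> b.
have RC a y : R (a, y) -> C y.
  by move=> Ray; split; [left; exists a|move=> yb; apply: (Nab a); rewrite -yb].
have [b' B'b' Nb'] : exists2 b', B' b' & ~ lspan L C b'.
  apply: contrapT => NB'.
  apply: (lin_indep_notin_lspan (C := C) hL Rindep (or_intror (conj Bb bfree))) => [x []//|].
  apply: (lspan_trans hL _ (hBB' Bb)) => y B'y.
  by apply: contrapT => Ny; apply: NB'; exists y.
have NCb' : ~ C b' by move=> /(lspan_mem hL).
have R'C : sub_set (exchanged (R `|` [set (b, b')])) (fun x => C x \/ x = b').
  move=> x [[a [/RC|[_ ->]]]|[Bx Nx]]; [by left|by right|left; split].
  - by right; split => // z Rxz; apply: (Nx z); left.
  - by move=> xb; apply: (Nx b'); right; rewrite xb.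
exists b'; split.
- by move=> a y [/Rsub //|[-> ->]].
- move=> a y z [Ray|[ab ->]] [Raz|[ab' ->]] //; first exact: Rfun Ray Raz.
  + by move: Ray; rewrite ab' => /bfree.
  + by move: Raz; rewrite ab => /bfree.
- move=> a a' y [Ray|[-> yb']] [Ra'y|[-> yb'']] //; first exact: Rinj Ray Ra'y.
  + by case: NCb'; rewrite -yb''; apply: RC Ray.
  + by case: NCb'; rewrite -yb'; apply: RC Ra'y.
- move=> a y [Ray By|[_ -> B'b]]; first by have [z Ryz] := Rclosed _ _ Ray By; exists z; left.
  have [[z Rb'z]|Nb'z] := pselect (exists z, R (b', z)); first by exists z; left.
  have [b'b|b'Nb] := pselect (b' = b); first by exists b'; right; rewrite b'b.
  by case: NCb'; split => //; right; split => // z Rb'z; apply: Nb'z; exists z.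
- apply: (lin_indep_sub R'C); apply: (lin_indep_adjoin hL) => //.
  by apply: (lin_indep_sub _ Rindep) => x [].
Qed.

Lemma lin_indep_card_le : (B : set K) #<= (B' : set K).
Proof.
have [R [Rex Rmax]] := Zorn_bigcup exchange_bigcup.
have Rtotal b : B b -> exists y, R (b, y).
  move=> Bb; apply: contrapT => Nb.
  have bfree z : ~ R (b, z) by move=> Rbz; apply: Nb; exists z.
  have [b' Rex'] := exchange_extend Rex Bb bfree.
  apply: Rmax Rex'; split; first by move=> u Ru; left.
  by move=> /(_ (b, b') (or_intror erefl)) /bfree.
have getR b : B b -> R (b, get [set y | R (b, y)]) by move/Rtotal/getPex.
apply/pcard_leP/injfunPex; exists (fun b => get [set y | R (b, y)]).
  by move=> b /getR/(exchange_sub Rex)[].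
move=> a b; rewrite !in_setE => /getR Ra /getR Rb E.
by apply: (exchange_inj Rex Ra); rewrite E.
Qed.

End Exchange.

Lemma bases_card_eq (V L B1 B2 : K -> Prop) : is_subfield L ->
  is_basis V L B1 -> is_basis V L B2 -> (B1 : set K) #= (B2 : set K).
Proof.
move=> hL [B1V indep1 span1] [B2V indep2 span2].
apply: Cantor_Bernstein.
  by apply: (lin_indep_card_le hL indep1) => b /B1V; apply: spans_lspan span2.
by apply: (lin_indep_card_le hL indep2) => b /B2V; apply: spans_lspan span1.
Qed.

Lemma same_dimP (V1 L1 V2 L2 : K -> Prop) : same_dim V1 L1 V2 L2 <->
  exists B1 B2, [/\ is_basis V1 L1 B1, is_basis V2 L2 B2 & (B1 : set K) #= (B2 : set K)].
Proof.
split=> [[B1 [B2 [f [g [bas1 bas2 [fB gB] gK fK]]]]]|[B1 [B2 [bas1 bas2]]]].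
  exists B1, B2; split => //; apply/card_set_bijP; exists f; split => //.
    by move=> a b; rewrite !in_setE => Ba Bb fab; rewrite -(gK _ Ba) fab gK.
  by move=> y B2y; exists (g y); [apply: gB|apply: fK].
move=> /ppcard_eqP[f]; exists B1, B2, f, (f^-1)%FUN; split => //.
- by split; [exact: funS|exact: invS].
- by move=> b Bb; apply: funK; rewrite inE.
- by move=> b Bb; apply: invK; rewrite inE.
Qed.

Lemma same_dim_sym (V1 L1 V2 L2 : K -> Prop) :
  same_dim V1 L1 V2 L2 -> same_dim V2 L2 V1 L1.
Proof.
move=> /same_dimP[B1 [B2 [bas1 bas2 B12]]]; apply/same_dimP.
by exists B2, B1; split => //; apply: card_esym.
Qed.

Lemma same_dim_trans (V1 L1 V2 L2 V3 L3 : K -> Prop) : is_subfield L2 ->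
  same_dim V1 L1 V2 L2 -> same_dim V2 L2 V3 L3 -> same_dim V1 L1 V3 L3.
Proof.
move=> hL2 /same_dimP[B1 [B2 [bas1 bas2 B12]]] /same_dimP[B2' [B3 [bas2' bas3 B23]]].
apply/same_dimP; exists B1, B3; split => //.
by apply: card_eq_trans B12 (card_eq_trans (bases_card_eq hL2 bas2 bas2') B23).
Qed.

End Dimension.

Section Compositum.
Variables (K : fieldType) (p : nat) (F : K -> Prop).
Implicit Types (V W S : K -> Prop).

Lemma compositum_pow_min V j S : is_subfield S -> sub_set V S ->
  (forall y, F y -> S (y ^+ (p ^ j))) -> sub_set (compositum_pow p F V j) S.
Proof. by move=> hS VS FS x; apply. Qed.

Lemma compositum_pow_subl V j : sub_set V (compositum_pow p F V j).
Proof. by move=> x Vx S _ /(_ x Vx). Qed.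

Lemma compositum_pow_pow V j y : F y -> compositum_pow p F V j (y ^+ (p ^ j)).
Proof. by move=> Fy S _ _ /(_ y Fy). Qed.

Lemma compositum_powE V W j : is_subfield W -> sub_set V W ->
  (forall y, F y -> W (y ^+ (p ^ j))) -> sub_set W (compositum_pow p F V j) ->
  eq_set W (compositum_pow p F V j).
Proof. by move=> hW VW FW WC x; split; [apply: WC|apply: compositum_pow_min]. Qed.

Lemma power_tower_over W (U : nat -> K -> Prop) : is_subfield F ->
  (forall i, is_subfield (U i) /\ sub_set (U i) F) ->
  (forall j, eq_set (U j) (compositum_pow p F W j)) -> power_tower p F U.
Proof.
move=> hF hU UW.
have WU i : sub_set W (U i) by move=> x Wx; apply/(UW i x); apply: compositum_pow_subl.
have FU i y : F y -> U i (y ^+ (p ^ i)) by move=> Fy; apply/(UW i _); apply: compositum_pow_pow.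
have Umono i j : (j <= i)%N -> sub_set (U i) (U j).
  move=> ji x /(UW i x); apply: compositum_pow_min; [exact: (hU j).1|exact: WU|].
  by move=> y Fy; rewrite -(subnK ji) expnD exprM; apply: FU; apply: subfieldX.
split=> // i j ji x; split.
- by move=> /(UW j x) Wx S hS US FS; apply: Wx => // z /(WU i)/US.
- by apply: compositum_pow_min; [exact: (hU j).1|exact: Umono|exact: FU].
Qed.

End Compositum.

Section FoliationComposition.
Variables (K : fieldType) (p : nat) (F W1 W2 W3 : K -> Prop).
Hypothesis hp : p \in [pchar K].
Hypothesis fol1 : foliation p F 2 [:: F; W1; W2].
Hypothesis fol2 : foliation p W1 2 [:: W1; W2; W3].

Local Notation V := (ext_seq [:: F; W1; W2; W3]).

Let tower1 : power_tower p F (ext_seq [:: F; W1; W2]).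
Proof. by case: fol1 => _ _ []. Qed.

Let tower2 : power_tower p W1 (ext_seq [:: W1; W2; W3]).
Proof. by case: fol2 => _ _ []. Qed.

Let hF : is_subfield F := (tower1.1 0%N).1.
Let hW1 : is_subfield W1 := (tower1.1 1%N).1.
Let hW2 : is_subfield W2 := (tower1.1 2%N).1.
Let hW3 : is_subfield W3 := (tower2.1 2%N).1.
Let W1_sub_F : sub_set W1 F := (tower1.1 1%N).2.
Let W2_sub_W1 : sub_set W2 W1 := (tower2.1 1%N).2.
Let W3_sub_W2 : sub_set W3 W2.
Proof. by case: fol2 => _ _ [/(_ 1%N isT)]. Qed.

Let W1_sub_W2Fp : sub_set W1 (compositum_pow p F W2 1) :=
  fun x => (tower1.2 2%N 1%N isT x).1.
Let W2_sub_W3W1p : sub_set W2 (compositum_pow p W1 W3 1) :=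
  fun x => (tower2.2 2%N 1%N isT x).1.

Let Fp_sub_W1 y : F y -> W1 (y ^+ p).
Proof.
by move=> Fy; rewrite -[p]expn1; apply/(tower1.2 1%N 1%N isT _); apply: compositum_pow_pow.
Qed.

Let Fp2_sub_W2 y : F y -> W2 (y ^+ (p ^ 2)).
Proof. by move=> Fy; apply/(tower1.2 2%N 2%N isT _); apply: compositum_pow_pow. Qed.

Let W1p2_sub_W3 y : W1 y -> W3 (y ^+ (p ^ 2)).
Proof. by move=> W1y; apply/(tower2.2 2%N 2%N isT _); apply: compositum_pow_pow. Qed.

Lemma W1_sub_W3Fp : sub_set W1 (compositum_pow p F W3 1).
Proof.
move=> x /W1_sub_W2Fp W1x S hS W3S FS; apply: W1x => // z /W2_sub_W3W1p; apply => // y /W1_sub_F.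
exact: FS.
Qed.

Lemma W2_sub_W3Fp2 : sub_set W2 (compositum_pow p F W3 2).
Proof.
move=> x /W2_sub_W3W1p W2x S hS W3S FS.
have W1S : sub_set W1 (fun z => S (z ^+ p)).
  move=> z /W1_sub_W3Fp/(_ (fun w => S (w ^+ p))); apply.
  - exact: subfield_frobenius_preimage.
  - by move=> w /W3S; apply: subfieldX.
  - by move=> y Fy; rewrite expn1 -exprM mulnn; apply: FS.
by apply: W2x => // y /W1S; rewrite expn1.
Qed.

Lemma Fpj_sub_W3 j y : (3 <= j)%N -> F y -> W3 (y ^+ (p ^ j)).
Proof.
move=> j3 Fy; rewrite -(subnK j3) expnD expnS mulnA exprM; apply: W1p2_sub_W3.
by rewrite exprM; apply: Fp_sub_W1; apply: subfieldX.
Qed.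

Lemma chain_eq_compositum j : eq_set (V j) (compositum_pow p F W3 j).
Proof.
case: j => [|[|[|j]]]; apply: compositum_powE => //.
- by move=> x /W3_sub_W2/W2_sub_W1/W1_sub_F.
- by move=> x Fx; rewrite -[x]expr1 -(expn0 p); apply: compositum_pow_pow.
- by move=> x /W3_sub_W2/W2_sub_W1.
- exact: W1_sub_W3Fp.
- exact: W2_sub_W3Fp2.
- by move=> y; apply: Fpj_sub_W3.
- exact: compositum_pow_subl.
Qed.

Lemma power_tower_chain : power_tower p F V.
Proof.
apply: (power_tower_over hF _ chain_eq_compositum) => -[|[|[|i]]] //.
- by split => // x.
- by split => // x /W2_sub_W1/W1_sub_F.
- by split => // x /W3_sub_W2/W2_sub_W1/W1_sub_F.
Qed.

Lemma chain_length_exact m : (m < 3)%N ->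
  ~ (forall N, (m <= N)%N -> eq_set (V N) (V m)).
Proof.
case: fol1 => _ _ _ exact1 _; case: fol2 => _ _ _ exact2 _.
case: m => [|[|[|m]]] // _ stable.
- apply: (exact1 0%N isT) => -[|[|N]] _ //; [exact: stable 1%N isT|exact: stable 2%N isT].
- by apply: (exact1 1%N isT) => -[|[|N]] // _; apply: stable 2%N isT.
- by apply: (exact2 1%N isT) => -[|[|N]] // _; apply: stable 3%N isT.
Qed.

Lemma chain_same_dim i j : (i < 3)%N -> (j < 3)%N ->
  same_dim (V i) (V i.+1) (V j) (V j.+1).
Proof.
case: fol1 => _ _ _ _ /(_ 0%N 1%N isT isT) dim01.
case: fol2 => _ _ _ _ /(_ 0%N 1%N isT isT) dim12.
have dim i' : (i' < 3)%N -> same_dim (V i') (V i'.+1) F W1.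
  case: i' => [|[|[|i']]] // _.
  - exact: same_dim_trans hW2 dim01 (same_dim_sym dim01).
  - exact: same_dim_sym dim01.
  - exact: same_dim_sym (same_dim_trans hW2 dim01 dim12).
by move=> /dim dimi /dim dimj; apply: same_dim_trans hW1 dimi (same_dim_sym dimj).
Qed.

Theorem foliation_compose : foliation p F 3 [:: F; W1; W2; W3].
Proof.
split=> //.
- by split; [case=> [|[|[|i]]]|exact: power_tower_chain].
- exact: chain_length_exact.
- exact: chain_same_dim.
Qed.

End FoliationComposition.

Theorem mainTheorem13 (K : fieldType) (p : nat) (hp : p \in [pchar K]%R)
  (W1 W2 W3 : K -> Prop) :
  is_subfield W1 -> is_subfield W2 -> is_subfield W3 -> sub_set W3 W2 ->
  foliation p (fun _ : K => True) 2 [:: (fun _ : K => True); W1; W2] ->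
  foliation p W1 2 [:: W1; W2; W3] ->
  foliation p (fun _ : K => True) 3 [:: (fun _ : K => True); W1; W2; W3].
Proof.
(* The subfield hypotheses already follow from the two foliations. *)
by move=> _ _ _ _; apply: foliation_compose.
Qed.
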